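(* The set $\Sigma=\{m\in(0,\infty):\partial_\xi^3\theta(0;m)=0\}$ is discrete. Writing $\Sigma=\{m_k\}_{k\ge1}$ (in increasing order), there exist $K>0$ and $k_0\in\mathbb{Z}$ such that $m_k=(k+k_0+\tfrac12)\pi+O(k^{-1})$ for all $k\ge K$. Moreover, $$m_k^3\,\partial_\xi^5\theta(0;m_k)=(-1)^{k+k_0+1}\cdot 15+O(k^{-2})\qquad(k\to\infty),$$ so in particular $\partial_\xi^5\theta(0;m_k)\neq 0$ for all sufficiently large $k$.
   Context: $\omega(\xi;m)=\sqrt{m^2+\xi^2}$ and $\theta(\xi;m)=\arctan\!\Big(\frac{\xi\sin(\omega(\xi;m))}{\sqrt{m^2+\xi^2\cos^2(\omega(\xi;m))}}\Big)$ for $m>0$, $\xi\in\mathbb{R}$. *)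

From Stdlib Require Import Reals Lra.
From Coquelicot Require Import Coquelicot.
Open Scope R_scope.

Definition omega (xi m : R) : R := sqrt (m ^ 2 + xi ^ 2).

Definition theta (xi m : R) : R :=
  atan (xi * sin (omega xi m) / sqrt (m ^ 2 + xi ^ 2 * (cos (omega xi m)) ^ 2)).

(* n-th derivative in xi of theta(.;m), evaluated at xi = 0
   (theta(.;m) is smooth for m > 0, so Coquelicot's total Derive_n is the
   genuine derivative). *)
Definition dtheta0 (n : nat) (m : R) : R := Derive_n (fun xi => theta xi m) n 0.

Definition Sigma (m : R) : Prop := 0 < m /\ dtheta0 3 m = 0.

(* The derivatives of theta at xi = 0 are obtained from a verified symbolic
   differentiator: theta is reflected as an expression, differentiated
   syntactically and specialised to xi = 0.  This gives
   d^3 theta(0;m) = h(m) / m^3 with h(m) = 3 m cos m - sin m (3 cos^2 m + 2 sin^2 m),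
   and an explicit trigonometric formula for d^5 theta(0;m).
   For m = k pi + t one has h(m) = (-1)^k phi(k pi, t) with
   phi(a, t) = 3 (a + t) cos t - 3 sin t + sin^3 t, which for a >= 0 is strictly
   decreasing on [0, pi] and, for a > 0, goes from 3a to -2 on [0, pi/2].  Hence
   Sigma has exactly one point m_k = k pi + t_k in each (k pi, k pi + pi/2),
   k >= 1, and none below pi.  The equation phi(k pi, t_k) = 0 gives
   m_k cos t_k <= 1, so pi/2 - t_k = O(1/k); substituting sin t_k = 1 - O(k^-2)
   and cos t_k = O(1/k) into the formula for d^5 theta gives the asymptotics. *)

From Stdlib Require Import Reals Lra Lia ZArith.
From Coquelicot Require Import Coquelicot.
Open Scope R_scope.

Inductive expr :=
  | EVar | EParam | EConst (z : Z)
  | EAdd (a b : expr) | EMul (a b : expr) | EOpp (a : expr) | EInv (a : expr)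
  | ESin (a : expr) | ECos (a : expr) | ESqrt (a : expr) | EAtan (a : expr).

Fixpoint eval (x m : R) (e : expr) : R :=
  match e with
  | EVar => x
  | EParam => m
  | EConst z => IZR z
  | EAdd a b => eval x m a + eval x m b
  | EMul a b => eval x m a * eval x m b
  | EOpp a => - eval x m a
  | EInv a => / eval x m a
  | ESin a => sin (eval x m a)
  | ECos a => cos (eval x m a)
  | ESqrt a => sqrt (eval x m a)
  | EAtan a => atan (eval x m a)
  end.

Fixpoint defined (x m : R) (e : expr) : Prop :=
  match e with
  | EAdd a b | EMul a b => defined x m a /\ defined x m b
  | EOpp a | ESin a | ECos a | EAtan a => defined x m a
  | EInv a => eval x m a <> 0 /\ defined x m a
  | ESqrt a => 0 < eval x m a /\ defined x m a
  | EVar | EParam | EConst _ => True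
  end.

Definition is_zero (e : expr) : bool :=
  match e with EConst z => Z.eqb z 0 | _ => false end.
Definition is_one (e : expr) : bool :=
  match e with EConst z => Z.eqb z 1 | _ => false end.

Lemma eval_is_zero x m e : is_zero e = true -> eval x m e = 0.
Proof. destruct e; try discriminate; intros H; apply Z.eqb_eq in H; subst; reflexivity. Qed.

Lemma eval_is_one x m e : is_one e = true -> eval x m e = 1.
Proof. destruct e; try discriminate; intros H; apply Z.eqb_eq in H; subst; reflexivity. Qed.

Definition eadd (a b : expr) : expr :=
  if is_zero a then b else if is_zero b then a else
  match a, b with EConst p, EConst q => EConst (p + q) | _, _ => EAdd a b end.

Definition emul (a b : expr) : expr :=
  if orb (is_zero a) (is_zero b) then EConst 0 else
  if is_one a then b else if is_one b then a else
  match a, b with EConst p, EConst q => EConst (p * q) | _, _ => EMul a b end.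

Definition eopp (a : expr) : expr :=
  match a with EConst z => EConst (- z) | EOpp b => b | _ => EOpp a end.

Lemma eval_eadd x m a b : eval x m (eadd a b) = eval x m a + eval x m b.
Proof.
  unfold eadd.
  destruct (is_zero a) eqn:Ha; [rewrite (eval_is_zero x m a Ha); ring|].
  destruct (is_zero b) eqn:Hb; [rewrite (eval_is_zero x m b Hb); ring|].
  destruct a, b; try reflexivity. apply plus_IZR.
Qed.

Lemma eval_emul x m a b : eval x m (emul a b) = eval x m a * eval x m b.
Proof.
  unfold emul.
  destruct (is_zero a) eqn:Ha; [rewrite (eval_is_zero x m a Ha); cbn; ring|].
  destruct (is_zero b) eqn:Hb; [rewrite (eval_is_zero x m b Hb); cbn; ring|]. cbn.
  destruct (is_one a) eqn:Ha1; [rewrite (eval_is_one x m a Ha1); ring|].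
  destruct (is_one b) eqn:Hb1; [rewrite (eval_is_one x m b Hb1); ring|].
  destruct a, b; try reflexivity. apply mult_IZR.
Qed.

Lemma eval_eopp x m a : eval x m (eopp a) = - eval x m a.
Proof. destruct a; try reflexivity; cbn; [apply opp_IZR | ring]. Qed.

Lemma defined_eadd x m a b : defined x m a -> defined x m b -> defined x m (eadd a b).
Proof.
  unfold eadd. destruct (is_zero a); auto. destruct (is_zero b); auto.
  destruct a, b; cbn; auto.
Qed.

Lemma defined_emul x m a b : defined x m a -> defined x m b -> defined x m (emul a b).
Proof.
  unfold emul. destruct (is_zero a), (is_zero b); cbn; auto.
  destruct (is_one a); auto. destruct (is_one b); auto. destruct a, b; cbn; auto.
Qed.

Lemma defined_eopp x m a : defined x m a -> defined x m (eopp a).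
Proof. destruct a; cbn; auto. Qed.

(* Chain-rule factors come first so that the derivative values match the
   Stdlib lemmas [derivable_pt_lim_comp] and [derivable_pt_lim_mult] verbatim. *)
Fixpoint ederiv (e : expr) : expr :=
  match e with
  | EVar => EConst 1
  | EParam | EConst _ => EConst 0
  | EAdd a b => eadd (ederiv a) (ederiv b)
  | EMul a b => eadd (emul (ederiv a) b) (emul a (ederiv b))
  | EOpp a => eopp (ederiv a)
  | EInv a => eopp (emul (ederiv a) (emul (EInv a) (EInv a)))
  | ESin a => emul (ECos a) (ederiv a)
  | ECos a => emul (EOpp (ESin a)) (ederiv a)
  | ESqrt a => emul (EInv (EMul (EConst 2) (ESqrt a))) (ederiv a)
  | EAtan a => emul (EInv (EAdd (EConst 1) (EMul a a))) (ederiv a)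
  end.

Lemma defined_ederiv x m e : defined x m e -> defined x m (ederiv e).
Proof.
  induction e; cbn; intros;
  repeat match goal with H : _ /\ _ |- _ => destruct H end;
  repeat first [apply defined_eadd | apply defined_emul | apply defined_eopp];
  cbn; auto; repeat split; auto.
  - apply Rmult_integral_contrapositive; split; [lra|].
    apply Rgt_not_eq, sqrt_lt_R0; assumption.
  - nra.
Qed.

Lemma derivable_pt_lim_eval x m e :
  defined x m e -> derivable_pt_lim (fun y => eval y m e) x (eval x m (ederiv e)).
Proof.
  induction e; cbn [defined ederiv]; intros Hdef;
  repeat match goal with H : _ /\ _ |- _ => destruct H end;
  rewrite ?eval_eopp, ?eval_eadd, ?eval_emul; cbn [eval].
  - apply derivable_pt_lim_id.
  - apply derivable_pt_lim_const.
  - apply derivable_pt_lim_const.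
  - apply (derivable_pt_lim_plus (fun y => eval y m e1) (fun y => eval y m e2)); auto.
  - apply (derivable_pt_lim_mult (fun y => eval y m e1) (fun y => eval y m e2)); auto.
  - apply (derivable_pt_lim_opp (fun y => eval y m e)); auto.
  - apply is_derive_Reals.
    replace (- _) with (- eval x m (ederiv e) / eval x m e ^ 2) by (field; assumption).
    apply (is_derive_inv (fun y => eval y m e)); [apply is_derive_Reals|]; auto.
  - apply (derivable_pt_lim_comp (fun y => eval y m e) sin); auto.
    apply derivable_pt_lim_sin.
  - apply (derivable_pt_lim_comp (fun y => eval y m e) cos); auto.
    apply derivable_pt_lim_cos.
  - apply (derivable_pt_lim_comp (fun y => eval y m e) sqrt); auto.
    apply derivable_pt_lim_sqrt; assumption.
  - replace (1 + _) with (1 + eval x m e ^ 2) by ring.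
    apply (derivable_pt_lim_comp (fun y => eval y m e) atan); auto.
    apply derivable_pt_lim_atan.
Qed.

Lemma defined_iter_ederiv x m e n : defined x m e -> defined x m (Nat.iter n ederiv e).
Proof. intros H; induction n; cbn; auto using defined_ederiv. Qed.

Lemma Derive_n_eval m e n x : (forall y, defined y m e) ->
  Derive_n (fun y => eval y m e) n x = eval x m (Nat.iter n ederiv e).
Proof.
  intros Hdef. revert x; induction n as [|n IHn]; intros x; [reflexivity|]. cbn [Derive_n].
  rewrite (Derive_ext _ (fun y => eval y m (Nat.iter n ederiv e))) by auto.
  apply is_derive_unique, is_derive_Reals, derivable_pt_lim_eval, defined_iter_ederiv, Hdef.
Qed.

(* Substitutes [EVar := 0] and simplifies; [sqrt (m * m)] becomes [m], which
   is why the correctness lemma needs [0 <= m]. *)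
Fixpoint subst0 (e : expr) : expr :=
  match e with
  | EVar => EConst 0
  | EParam => EParam
  | EConst z => EConst z
  | EAdd a b => eadd (subst0 a) (subst0 b)
  | EMul a b => emul (subst0 a) (subst0 b)
  | EOpp a => eopp (subst0 a)
  | EInv a => let a' := subst0 a in if is_one a' then EConst 1 else EInv a'
  | ESin a => let a' := subst0 a in if is_zero a' then EConst 0 else ESin a'
  | ECos a => let a' := subst0 a in if is_zero a' then EConst 1 else ECos a'
  | EAtan a => let a' := subst0 a in if is_zero a' then EConst 0 else EAtan a'
  | ESqrt a => match subst0 a with EMul EParam EParam => EParam | a' => ESqrt a' end
  end.

Lemma eval_subst0 m e : 0 <= m -> eval 0 m (subst0 e) = eval 0 m e.
Proof.
  intros Hm; induction e; cbn [subst0];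
    rewrite ?eval_eopp, ?eval_eadd, ?eval_emul; cbn [eval]; try congruence.
  - destruct (is_one (subst0 e)) eqn:E; cbn; rewrite <- IHe; [|reflexivity].
    rewrite (eval_is_one 0 m _ E); field.
  - destruct (is_zero (subst0 e)) eqn:E; cbn; rewrite <- IHe; [|reflexivity].
    rewrite (eval_is_zero 0 m _ E); now rewrite sin_0.
  - destruct (is_zero (subst0 e)) eqn:E; cbn; rewrite <- IHe; [|reflexivity].
    rewrite (eval_is_zero 0 m _ E); now rewrite cos_0.
  - rewrite <- IHe. destruct (subst0 e) as [| | | |a b| | | | | |]; try reflexivity.
    destruct a, b; try reflexivity. cbn. symmetry; apply sqrt_square, Hm.
  - destruct (is_zero (subst0 e)) eqn:E; cbn; rewrite <- IHe; [|reflexivity].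
    rewrite (eval_is_zero 0 m _ E); now rewrite atan_0.
Qed.

Definition omega_expr : expr := ESqrt (EAdd (EMul EParam EParam) (EMul EVar EVar)).

Definition theta_expr : expr :=
  EAtan (EMul (EMul EVar (ESin omega_expr))
    (EInv (ESqrt (EAdd (EMul EParam EParam)
                       (EMul (EMul EVar EVar) (EMul (ECos omega_expr) (ECos omega_expr))))))).

Lemma eval_theta_expr xi m : eval xi m theta_expr = theta xi m.
Proof. unfold theta, omega; cbn. unfold Rdiv. rewrite !Rmult_1_r. reflexivity. Qed.

Lemma defined_theta_expr xi m : 0 < m -> defined xi m theta_expr.
Proof. intros Hm; cbn; repeat split; try nra. apply Rgt_not_eq, sqrt_lt_R0; nra. Qed.

Lemma dtheta0_subst0 n m : 0 < m ->
  dtheta0 n m = eval 0 m (subst0 (Nat.iter n ederiv theta_expr)).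
Proof.
  intros Hm. unfold dtheta0.
  rewrite (Derive_n_ext _ (fun xi => eval xi m theta_expr))
    by (intros; symmetry; apply eval_theta_expr).
  rewrite Derive_n_eval by (intros; apply defined_theta_expr, Hm).
  symmetry; apply eval_subst0; lra.
Qed.

Definition theta3_numerator (m : R) : R :=
  3 * m * cos m - sin m * (3 * cos m ^ 2 + 2 * sin m ^ 2).

Lemma dtheta0_3 m : 0 < m -> dtheta0 3 m = theta3_numerator m / m ^ 3.
Proof.
  intros Hm. rewrite dtheta0_subst0 by exact Hm.
  vm_compute (subst0 _). cbv [eval theta3_numerator]. field. lra.
Qed.

Lemma dtheta0_5 m : 0 < m -> dtheta0 5 m =
  - 15 * sin m / m ^ 3 - (15 * cos m + 30 * cos m ^ 3) / m ^ 4
  + (45 * sin m * cos m ^ 4 + 60 * sin m ^ 3 * cos m ^ 2 + 24 * sin m ^ 5) / m ^ 5.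
Proof.
  intros Hm. rewrite dtheta0_subst0 by exact Hm.
  vm_compute (subst0 _). cbv [eval]. field. lra.
Qed.
Lemma pow_m1_cases k : (-1) ^ k = 1 \/ (-1) ^ k = -1.
Proof. induction k as [|k [IH | IH]]; cbn; rewrite ?IH; [left | right | left]; ring. Qed.

Lemma sin_INR_PI_add k t : sin (INR k * PI + t) = (-1) ^ k * sin t.
Proof.
  induction k as [|k IHk]; [cbn; rewrite Rmult_0_l, Rplus_0_l; ring|].
  rewrite S_INR. replace ((INR k + 1) * PI + t) with ((INR k * PI + t) + PI) by ring.
  rewrite neg_sin, IHk; cbn; ring.
Qed.

Lemma cos_INR_PI_add k t : cos (INR k * PI + t) = (-1) ^ k * cos t.
Proof.
  induction k as [|k IHk]; [cbn; rewrite Rmult_0_l, Rplus_0_l; ring|].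
  rewrite S_INR. replace ((INR k + 1) * PI + t) with ((INR k * PI + t) + PI) by ring.
  rewrite neg_cos, IHk; cbn; ring.
Qed.

Lemma sin2_cos2_pow t : sin t ^ 2 + cos t ^ 2 = 1.
Proof. rewrite <- (sin2_cos2 t); unfold Rsqr; ring. Qed.

Lemma sin_ge_cubic d : 0 <= d <= PI -> d - d ^ 3 / 6 <= sin d.
Proof.
  intros Hd. destruct (sin_bound d 0 (proj1 Hd) (proj2 Hd)) as [H _].
  unfold sin_approx, sin_term in H; cbn in H. lra.
Qed.

Lemma decompose_period p x : 0 < p -> 0 <= x ->
  exists k t, x = INR k * p + t /\ 0 <= t < p.
Proof.
  intros Hp Hx. destruct (base_Int_part (x / p)) as [Hlo Hhi].
  set (z := Int_part (x / p)) in *.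
  assert (0 <= x / p) by (apply Rdiv_le_0_compat; assumption).
  assert (Hz : (-1 < z)%Z) by (apply lt_IZR; lra).
  exists (Z.to_nat z), (x - INR (Z.to_nat z) * p).
  rewrite INR_IZR_INZ, Z2Nat.id by lia. split; [ring|].
  apply (Rmult_le_compat_r p) in Hlo; [|lra].
  assert (x / p < IZR z + 1) as Hhi' by lra.
  apply (Rmult_lt_compat_r p) in Hhi'; [|exact Hp].
  unfold Rdiv in *. rewrite Rmult_assoc, Rinv_l, Rmult_1_r in Hlo, Hhi' by lra.
  lra.
Qed.

Definition phi (a t : R) : R := 3 * (a + t) * cos t - 3 * sin t + sin t ^ 3.

Lemma theta3_numerator_INR_PI_add k t :
  theta3_numerator (INR k * PI + t) = (-1) ^ k * phi (INR k * PI) t.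
Proof.
  unfold theta3_numerator, phi. rewrite sin_INR_PI_add, cos_INR_PI_add.
  pose proof (sin2_cos2_pow t) as E.
  destruct (pow_m1_cases k) as [-> | ->]; apply Rminus_diag_uniq.
  - replace (_ - _) with (-3 * sin t * (sin t ^ 2 + cos t ^ 2 - 1)) by ring. rewrite E; ring.
  - replace (_ - _) with (3 * sin t * (sin t ^ 2 + cos t ^ 2 - 1)) by ring. rewrite E; ring.
Qed.

Lemma phi_0 a : phi a 0 = 3 * a.
Proof. unfold phi; rewrite sin_0, cos_0; ring. Qed.

Lemma phi_PI2 a : phi a (PI / 2) = -2.
Proof. unfold phi; rewrite sin_PI2, cos_PI2; ring. Qed.

Lemma derivable_pt_lim_phi a t :
  derivable_pt_lim (phi a) t (3 * sin t * (sin t * cos t - (a + t))).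
Proof. apply is_derive_Reals; unfold phi; auto_derive; [exact I | ring]. Qed.

Lemma continuity_phi a : continuity (phi a).
Proof. intros t. apply derivable_continuous_pt. eexists; apply derivable_pt_lim_phi. Qed.

(* On [(0, PI)] the derivative is negative since [sin t cos t < t]. *)
Lemma phi_decreasing a u v : 0 <= a -> 0 <= u -> u < v -> v <= PI -> phi a v < phi a u.
Proof.
  intros Ha Hu Huv Hv.
  destruct (MVT_cor2 (phi a) (fun t => 3 * sin t * (sin t * cos t - (a + t))) u v Huv)
    as [c [Hdiff Hc]]; [intros; apply derivable_pt_lim_phi|].
  assert (Hsin : 0 < sin c) by (apply sin_gt_0; lra).
  pose proof (sin_lt_x c ltac:(lra)). pose proof (COS_bound c).
  assert (sin c * cos c - (a + c) < 0) by nra.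
  assert (3 * sin c * (sin c * cos c - (a + c)) < 0) by nra.
  nra.
Qed.

Lemma phi_root_unique a t1 t2 : 0 <= a -> 0 <= t1 <= PI -> 0 <= t2 <= PI ->
  phi a t1 = 0 -> phi a t2 = 0 -> t1 = t2.
Proof.
  intros Ha H1 H2 E1 E2. destruct (Rtotal_order t1 t2) as [Hlt | [Heq | Hgt]]; auto.
  - pose proof (phi_decreasing a t1 t2 Ha ltac:(lra) Hlt ltac:(lra)); lra.
  - pose proof (phi_decreasing a t2 t1 Ha ltac:(lra) Hgt ltac:(lra)); lra.
Qed.

Definition phi_root (a : R) (Ha : 0 < a) : {t | 0 < t < PI / 2 /\ phi a t = 0}.
Proof.
  assert (H0 : - phi a 0 < 0) by (rewrite phi_0; lra).
  assert (H1 : 0 < - phi a (PI / 2)) by (rewrite phi_PI2; lra).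
  destruct (IVT (fun t => - phi a t) 0 (PI / 2) (continuity_opp _ (continuity_phi a))
              PI2_RGT_0 H0 H1) as [t [Ht E]].
  exists t. assert (E' : phi a t = 0) by lra. split; [|exact E'].
  split; apply Rnot_le_lt; intros Hle.
  - assert (t = 0) by lra; subst t. rewrite phi_0 in E'. lra.
  - assert (t = PI / 2) by lra; subst t. rewrite phi_PI2 in E'. lra.
Defined.

Lemma INR_S_PI_pos j : 0 < INR (S j) * PI.
Proof. apply Rmult_lt_0_compat; [apply lt_0_INR; lia | apply PI_RGT_0]. Qed.

(* [tk 0] is a junk value: [mk] enumerates [Sigma] from [k = 1] on. *)
Definition tk (k : nat) : R :=
  match k with
  | O => 0
  | S j => proj1_sig (phi_root (INR (S j) * PI) (INR_S_PI_pos j))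
  end.

Definition mk (k : nat) : R := INR k * PI + tk k.

Lemma tk_spec k : (1 <= k)%nat -> 0 < tk k < PI / 2 /\ phi (INR k * PI) (tk k) = 0.
Proof. intros Hk. destruct k as [|j]; [lia|]. exact (proj2_sig (phi_root _ _)). Qed.

Lemma Sigma_iff_numerator m : Sigma m <-> 0 < m /\ theta3_numerator m = 0.
Proof.
  unfold Sigma. split; intros [Hm E]; split; auto; rewrite dtheta0_3 in * by exact Hm.
  - assert (/ m ^ 3 <> 0) by (apply Rinv_neq_0_compat, pow_nonzero; lra).
    unfold Rdiv in E. apply Rmult_integral in E as [E | E]; tauto.
  - rewrite E. apply Rdiv_0_l.
Qed.

Lemma Sigma_mk x : Sigma x <-> exists k, (1 <= k)%nat /\ x = mk k.
Proof.
  rewrite Sigma_iff_numerator. pose proof PI_RGT_0. split.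
  - intros [Hx E]. destruct (decompose_period PI x) as [k [t [-> Ht]]]; try lra.
    rewrite theta3_numerator_INR_PI_add in E.
    apply Rmult_integral in E as [E | E]; [exfalso; revert E; apply pow_nonzero; lra|].
    destruct k as [|j].
    + cbn in Hx, E. rewrite Rmult_0_l, Rplus_0_l in Hx. rewrite Rmult_0_l in E.
      pose proof (phi_decreasing 0 0 t ltac:(lra) ltac:(lra) Hx ltac:(lra)) as Hdec.
      rewrite phi_0 in Hdec. lra.
    + exists (S j); split; [lia|]. unfold mk. f_equal.
      destruct (tk_spec (S j) ltac:(lia)) as [Htk Etk].
      pose proof (INR_S_PI_pos j).
      apply (phi_root_unique (INR (S j) * PI)); auto; lra.
  - intros [k [Hk ->]]. destruct (tk_spec k Hk) as [Ht E].
    pose proof (pos_INR k). unfold mk. split; [nra|].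
    rewrite theta3_numerator_INR_PI_add, E; ring.
Qed.

Lemma mk_bounds k : (1 <= k)%nat -> INR k * PI < mk k < INR k * PI + PI / 2.
Proof. intros Hk. destruct (tk_spec k Hk) as [Ht _]. unfold mk; lra. Qed.

Lemma mk_increasing k : (1 <= k)%nat -> mk k < mk (S k).
Proof.
  intros Hk. pose proof (mk_bounds k Hk). pose proof (mk_bounds (S k) ltac:(lia)).
  rewrite S_INR in *. pose proof PI_RGT_0. lra.
Qed.

Lemma mk_separated j k : (1 <= j)%nat -> (1 <= k)%nat -> Rabs (mk j - mk k) < PI / 2 -> j = k.
Proof.
  intros Hj Hk Hd. pose proof (mk_bounds j Hj). pose proof (mk_bounds k Hk).
  apply Rabs_def2 in Hd. pose proof PI_RGT_0.
  destruct (Nat.lt_trichotomy j k) as [Hlt | [Heq | Hgt]]; [exfalso | exact Heq | exfalso].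
  - assert (INR j + 1 <= INR k) by (rewrite <- S_INR; apply le_INR; lia). nra.
  - assert (INR k + 1 <= INR j) by (rewrite <- S_INR; apply le_INR; lia). nra.
Qed.

Lemma mk_cos_tk_le k : (1 <= k)%nat -> mk k * cos (tk k) <= 1.
Proof.
  intros Hk. destruct (tk_spec k Hk) as [Ht E]. unfold phi in E; fold (mk k) in E.
  pose proof PI2_3_2. pose proof (SIN_bound (tk k)).
  assert (0 < sin (tk k)) by (apply sin_gt_0; lra).
  assert (0 < sin (tk k) ^ 3) by (apply pow_lt; lra).
  unfold mk in *. lra.
Qed.

(* With [d = PI/2 - tk k] one has [cos (tk k) = sin d >= d / 3], and [mk k cos (tk k) <= 1]. *)
Lemma mk_sub_half_odd_PI k : (1 <= k)%nat -> Rabs (mk k - (INR k + 1 / 2) * PI) <= 3 / INR k.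
Proof.
  intros Hk. destruct (tk_spec k Hk) as [Ht _].
  pose proof (mk_bounds k Hk). pose proof (mk_cos_tk_le k Hk). pose proof PI2_3_2. pose proof PI_4.
  assert (Hk1 : 1 <= INR k) by (apply (le_INR 1); exact Hk).
  set (d := PI / 2 - tk k).
  replace (mk k - (INR k + 1 / 2) * PI) with (- d) by (unfold d, mk; field).
  rewrite Rabs_Ropp, Rabs_right by (unfold d; lra).
  assert (Hd : d <= 3 * cos (tk k)).
  { pose proof (sin_ge_cubic d ltac:(unfold d; lra)) as Hsin.
    replace (sin d) with (cos (tk k)) in Hsin by (unfold d; rewrite sin_shift; reflexivity).
    assert (0 < d < 2) by (unfold d; lra).
    assert (d ^ 3 <= 4 * d) by nra. lra. }
  assert (INR k <= mk k) by nra.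
  assert (mk k * d <= mk k * (3 * cos (tk k))) by (apply Rmult_le_compat_l; nra).
  assert (INR k * d <= 3) by nra.
  apply Rle_div_r; [lra | rewrite Rmult_comm; assumption].
Qed.

Lemma mk3_dtheta0_5 k : (1 <= k)%nat ->
  mk k ^ 3 * dtheta0 5 (mk k) = (-1) ^ k *
    (- 15 * sin (tk k) - (15 * cos (tk k) + 30 * cos (tk k) ^ 3) / mk k
     + (45 * sin (tk k) * cos (tk k) ^ 4 + 60 * sin (tk k) ^ 3 * cos (tk k) ^ 2
        + 24 * sin (tk k) ^ 5) / mk k ^ 2).
Proof.
  intros Hk. pose proof (mk_bounds k Hk). pose proof (pos_INR k). pose proof PI_RGT_0.
  assert (Hm : 0 < mk k) by nra.
  rewrite dtheta0_5 by exact Hm.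
  replace (sin (mk k)) with ((-1) ^ k * sin (tk k)) by (symmetry; apply sin_INR_PI_add).
  replace (cos (mk k)) with ((-1) ^ k * cos (tk k)) by (symmetry; apply cos_INR_PI_add).
  destruct (pow_m1_cases k) as [-> | ->]; field; lra.
Qed.

Lemma fifth_remainder_bound s c u : 0 < s <= 1 -> 0 < c <= u -> u <= 1 -> s ^ 2 + c ^ 2 = 1 ->
  Rabs (15 * (1 - s) - (15 * c + 30 * c ^ 3) * u
        + (45 * s * c ^ 4 + 60 * s ^ 3 * c ^ 2 + 24 * s ^ 5) * u ^ 2) <= 189 * u ^ 2.
Proof.
  intros Hs Hc Hu E.
  assert (Hsu : 0 <= 1 - s <= u ^ 2) by nra.
  assert (Hc3 : 0 <= c ^ 3 <= c) by nra.
  assert (Hlin : 0 <= (15 * c + 30 * c ^ 3) * u <= 45 * u ^ 2) by nra.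
  assert (0 <= s ^ 3 <= 1) by nra. assert (0 <= s ^ 5 <= 1) by nra.
  assert (0 <= c ^ 2 <= 1) by nra. assert (0 <= c ^ 4 <= 1) by nra.
  assert (0 <= 45 * s * c ^ 4 + 60 * s ^ 3 * c ^ 2 + 24 * s ^ 5 <= 129) by nra.
  assert (0 <= u ^ 2) by nra.
  apply Rabs_le; nra.
Qed.

Lemma mk3_dtheta0_5_asymptotics k : (1 <= k)%nat ->
  Rabs (mk k ^ 3 * dtheta0 5 (mk k) + (-1) ^ k * 15) <= 189 / INR k ^ 2.
Proof.
  intros Hk. destruct (tk_spec k Hk) as [Ht _].
  pose proof (mk_bounds k Hk). pose proof (mk_cos_tk_le k Hk). pose proof PI2_3_2.
  assert (Hk1 : 1 <= INR k) by (apply (le_INR 1); exact Hk).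
  assert (Hkm : INR k <= mk k) by nra.
  assert (0 < sin (tk k) <= 1) by (split; [apply sin_gt_0 | apply SIN_bound]; lra).
  assert (0 < cos (tk k)) by (apply cos_gt_0; lra).
  rewrite mk3_dtheta0_5 by exact Hk.
  set (u := / mk k).
  assert (Hu : 0 < u <= / INR k) by (split; [apply Rinv_0_lt_compat | apply Rinv_le_contravar]; lra).
  assert (cos (tk k) <= u).
  { unfold u. apply (Rmult_le_reg_l (mk k)); [lra|]. rewrite Rinv_r; lra. }
  assert (/ INR k <= 1) by (rewrite <- Rinv_1; apply Rinv_le_contravar; lra).
  replace (_ + (-1) ^ k * 15) with ((-1) ^ k *
    (15 * (1 - sin (tk k)) - (15 * cos (tk k) + 30 * cos (tk k) ^ 3) * u
     + (45 * sin (tk k) * cos (tk k) ^ 4 + 60 * sin (tk k) ^ 3 * cos (tk k) ^ 2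
        + 24 * sin (tk k) ^ 5) * u ^ 2)) by (unfold u; field; lra).
  rewrite Rabs_mult, pow_1_abs, Rmult_1_l.
  eapply Rle_trans; [apply fifth_remainder_bound; auto using sin2_cos2_pow; lra|].
  unfold Rdiv. rewrite <- pow_inv. apply Rmult_le_compat_l; [lra|].
  apply pow_incr; lra.
Qed.

Lemma dtheta0_5_mk_neq0 k : (4 <= k)%nat -> dtheta0 5 (mk k) <> 0.
Proof.
  intros Hk Hzero. pose proof (mk3_dtheta0_5_asymptotics k ltac:(lia)) as Hb.
  rewrite Hzero, Rmult_0_r, Rplus_0_l, Rabs_mult, pow_1_abs, Rmult_1_l in Hb.
  assert (4 <= INR k) by (apply (le_INR 4) in Hk; cbn in Hk; lra).
  assert (189 / INR k ^ 2 < 15).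
  { apply Rlt_div_l; [nra|]. nra. }
  rewrite Rabs_right in Hb; lra.
Qed.

Theorem lemma5p2 :
  (forall x, Sigma x -> exists eps, 0 < eps /\
       forall y, Sigma y -> Rabs (y - x) < eps -> y = x) /\
  exists mk : nat -> R,
    (forall k, (1 <= k)%nat -> mk k < mk (S k)) /\
    (forall x, Sigma x <-> exists k, (1 <= k)%nat /\ x = mk k) /\
    exists (K : R) (k0 : Z), 0 < K /\
      (exists C, forall k, (1 <= k)%nat -> K <= INR k ->
         Rabs (mk k - (IZR (Z.of_nat k + k0) + 1/2) * PI) <= C / INR k) /\
      (exists C N, forall k, (1 <= k)%nat -> (N <= k)%nat ->
         Rabs (mk k ^ 3 * dtheta0 5 (mk k)
               - powerRZ (-1) (Z.of_nat k + k0 + 1) * 15) <= C / (INR k) ^ 2) /\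
      (exists N, forall k, (N <= k)%nat -> dtheta0 5 (mk k) <> 0).
Proof.
  split.
  - intros x Hx. exists (PI / 2). split; [exact PI2_RGT_0|]. intros y Hy Hyx.
    apply Sigma_mk in Hx as [k [Hk ->]]. apply Sigma_mk in Hy as [j [Hj ->]].
    f_equal. exact (mk_separated j k Hj Hk Hyx).
  - exists mk. split; [exact mk_increasing|]. split; [exact Sigma_mk|].
    exists 1, 0%Z. split; [lra|]. split; [|split].
    + exists 3. intros k Hk _. rewrite Z.add_0_r, <- INR_IZR_INZ.
      exact (mk_sub_half_odd_PI k Hk).
    + exists 189, 1%nat. intros k Hk _.
      replace (powerRZ (-1) (Z.of_nat k + 0 + 1)) with (- (-1) ^ k)
        by (replace (Z.of_nat k + 0 + 1)%Z with (Z.of_nat (S k)) by lia;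
            rewrite <- pow_powerRZ; cbn; ring).
      replace (_ - _) with (mk k ^ 3 * dtheta0 5 (mk k) + (-1) ^ k * 15) by ring.
      exact (mk3_dtheta0_5_asymptotics k Hk).
    + exists 4%nat. exact dtheta0_5_mk_neq0.
Qed.
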